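(* Let $P \in S$ have degree $n > 0$ in $x$. Then there exist $n$ elements of $S$ that generate $C_S(P)$ as a $K$-algebra.
   Context: Standing conventions: $K$ is a field, $R = K[y]$, $\sigma$ is a $K$-algebra endomorphism of $R$ with $\deg_y(\sigma(y)) > 1$, and $\delta$ is a $K$-linear $\sigma$-derivation of $R$ ($\delta(ab) = \sigma(a)\delta(b) + \delta(a)b$). $S = R[x;\sigma,\delta]$ is the Ore extension (polynomials $\sum r_i x^i$, $r_i\in R$, with $xr = \sigma(r)x + \delta(r)$). $C_S(P)$ is the centralizer of $P$ in $S$. *)

From HB Require Import structures.
From mathcomp Require Import all_boot all_order all_algebra.
Set Implicit Arguments. Unset Strict Implicit. Unset Printing Implicit Defensive.
Import Order.TTheory GRing.Theory Num.Theory.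
Local Open Scope ring_scope.

(* R = K[y] is {poly K}; elements of S = R[x; sigma, delta] are represented by
   their coefficient sequences  sum_i r_i x^i  as {poly {poly K}}
   (the outer variable standing for x, coefficients r_i written on the left).
   Only the additive structure of {poly {poly K}} is used; the Ore product is
   [ore_mul] below. *)

Definition is_Kalg_endo (K : fieldType) (sigma : {poly K} -> {poly K}) : Prop :=
  [/\ forall a b, sigma (a + b) = sigma a + sigma b,
      forall a b, sigma (a * b) = sigma a * sigma b,
      sigma 1 = 1 &
      forall (c : K) a, sigma (c *: a) = c *: sigma a].

Definition is_sigma_derivation (K : fieldType)
    (sigma delta : {poly K} -> {poly K}) : Prop :=
  [/\ forall a b, delta (a + b) = delta a + delta b,
      forall (c : K) a, delta (c *: a) = c *: delta a &
      forall a b, delta (a * b) = sigma a * delta b + delta a * b].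

(* left multiplication by x in S:  x * (sum q_j x^j) = sum (sigma q_j x^(j+1) + delta q_j x^j) *)
Definition ore_xmul (K : fieldType) (sigma delta : {poly K} -> {poly K})
    (q : {poly {poly K}}) : {poly {poly K}} :=
  map_poly sigma q * 'X + map_poly delta q.

Definition ore_mul (K : fieldType) (sigma delta : {poly K} -> {poly K})
    (p q : {poly {poly K}}) : {poly {poly K}} :=
  \sum_(i < size p) (p`_i)%:P * iter i (ore_xmul sigma delta) q.

Definition centralizer (K : fieldType) (sigma delta : {poly K} -> {poly K})
    (P : {poly {poly K}}) : {poly {poly K}} -> Prop :=
  fun Q => ore_mul sigma delta P Q = ore_mul sigma delta Q P.

Inductive in_gen_alg (K : fieldType) (sigma delta : {poly K} -> {poly K})
    (G : {poly {poly K}} -> Prop) : {poly {poly K}} -> Prop :=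
  | ga_const (c : K) : in_gen_alg sigma delta G (c%:P)%:P
  | ga_gen Q : G Q -> in_gen_alg sigma delta G Q
  | ga_add Q1 Q2 : in_gen_alg sigma delta G Q1 -> in_gen_alg sigma delta G Q2 ->
      in_gen_alg sigma delta G (Q1 + Q2)
  | ga_mul Q1 Q2 : in_gen_alg sigma delta G Q1 -> in_gen_alg sigma delta G Q2 ->
      in_gen_alg sigma delta G (ore_mul sigma delta Q1 Q2).

From HB Require Import structures.
From mathcomp Require Import all_boot all_order all_algebra zify.
From Stdlib Require Import Classical ClassicalEpsilon.

(* Since sigma is composition with sigma(y), it multiplies degrees in y by
   D = deg sigma(y) and has no kernel.  Hence deg_x is additive on S and
   lc(A B) = lc(A) sigma^(deg A)(lc B).  Comparing leading coefficients in
   P Q = Q P and P Z = Z P for Q, Z in C_S(P) of equal degree gives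
   sigma^n(lc Z) lc Q = sigma^n(lc Q) lc Z, and since sigma^n multiplies
   degrees by D^n > 1 this forces lc Q = c lc Z for a scalar c in K; so
   Q - c Z in C_S(P) has smaller degree.

   The generators are g_0 = P and, for 0 < i < n, an element of C_S(P) of
   least degree congruent to i mod n (chosen classically; 1 if there is
   none).  An element Q of
   C_S(P) of degree m is then generated by induction on m: a power of P times
   the generator of the residue class of m (or 1) has degree m, and
   subtracting a scalar multiple of it lowers the degree. *)

Set Implicit Arguments. Unset Strict Implicit. Unset Printing Implicit Defensive.
Import GRing.Theory.
Local Open Scope ring_scope.

Section Endomorphism.
Variables (K : fieldType) (t : {poly K} -> {poly K}).
Hypothesis Ht : is_Kalg_endo t.

Lemma endo0 : t 0 = 0.
Proof. by case: Ht => tD _ _ _; apply: (addrI (t 0)); rewrite -tD !addr0. Qed.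

Lemma endoN a : t (- a) = - t a.
Proof. by case: Ht => tD _ _ _; apply: (addrI (t a)); rewrite -tD !subrr endo0. Qed.

Lemma endoC c : t c%:P = c%:P.
Proof. by case: Ht => _ _ t1 tZ; rewrite -alg_polyC tZ t1. Qed.

Lemma endo_comp f : t f = f \Po t 'X.
Proof.
elim/poly_ind: f => [|p c IH]; first by rewrite endo0 comp_poly0.
have [tD tM _ _] := Ht.
by rewrite tD tM IH endoC comp_polyD comp_polyM comp_polyX comp_polyC.
Qed.

Lemma size_endo f : (size (t f)).-1 = ((size f).-1 * (size (t 'X)).-1)%N.
Proof. by rewrite endo_comp size_comp_poly. Qed.

Lemma endo_eq0 f : (1 < size (t 'X))%N -> (t f == 0) = (f == 0).
Proof. by move=> tX; rewrite endo_comp comp_poly_eq0. Qed.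

Lemma iter_endo k : is_Kalg_endo (iter k t).
Proof.
have [tD tM t1 tZ] := Ht; elim: k => [|k [iD iM i1 iZ]]; first by split.
by split=> /= [a b|a b||c a]; rewrite ?iD ?iM ?i1 ?iZ.
Qed.

Lemma size_iter_endoX k : (size (iter k t 'X)).-1 = ((size (t 'X)).-1 ^ k)%N.
Proof.
elim: k => [|k IH]; first by rewrite size_polyX.
by rewrite iterS size_endo IH expnSr.
Qed.

End Endomorphism.

Lemma size_sub_lead (R : nzRingType) (p q : {poly R}) :
  p != 0 -> size p = size q -> lead_coef p = lead_coef q -> (size (p - q)%R < size p)%N.
Proof.
move=> p0 eqs el.
have le : (size (p - q)%R <= size p)%N.
  by rewrite (leq_trans (size_polyD _ _)) // size_polyN -eqs maxnn.
rewrite ltn_neqAle le andbT; apply: contra p0 => /eqP e.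
have : lead_coef (p - q) == 0.
  by rewrite lead_coefE e coefB -lead_coefE eqs -lead_coefE el subrr.
by rewrite lead_coef_eq0 => /eqP pq0; rewrite -size_poly_eq0 -e pq0 size_poly0.
Qed.

(* The "twisted commutation" t(a) b = t(b) a of the leading coefficients of two
   commuting Ore polynomials forces a and b to be proportional, provided t
   raises degrees by a factor D > 1. *)
Section TwistedProportionality.
Variables (K : fieldType) (t : {poly K} -> {poly K}).
Hypothesis Ht : is_Kalg_endo t.
Hypothesis t_deg : (1 < (size (t 'X)).-1)%N.

Let tX : (1 < size (t 'X))%N.
Proof. by move: t_deg; case: (size _) => [|[]]. Qed.

Let size_t f : f != 0 -> size (t f) = ((size f).-1 * (size (t 'X)).-1).+1.
Proof. by move=> f0; rewrite -size_endo // -polySpred // endo_eq0. Qed.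

(* comparing degrees: D deg a + deg b = D deg b + deg a, so deg a = deg b *)
Lemma twisted_comm_size a b :
  a != 0 -> b != 0 -> t a * b = t b * a -> size a = size b.
Proof.
move=> a0 b0 e; have : size (t a * b) = size (t b * a) by rewrite e.
rewrite !size_mul ?endo_eq0 // (size_t a0) (size_t b0) (polySpred a0) (polySpred b0) /=.
set A := (size a).-1; set B := (size b).-1; set D := (size (t 'X)).-1 => h.
have : ((D - 1) * A = (D - 1) * B)%N by nia.
by move/eqP; rewrite eqn_mul2l subn_eq0 leqNgt t_deg => /eqP ->.
Qed.

(* b = c a with c = lc(b)/lc(a): otherwise b - c a would be a counterexample
   of smaller degree *)
Lemma twisted_comm_proportional a b :
  a != 0 -> b != 0 -> t a * b = t b * a -> exists c : K, b = c *: a.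
Proof.
move=> a0 b0 e; set c := lead_coef b / lead_coef a; exists c.
apply/eqP; rewrite -subr_eq0; apply/negPn/negP => r0.
have c0 : c != 0 by rewrite mulf_neq0 ?invr_eq0 ?lead_coef_eq0.
have eqs := twisted_comm_size a0 b0 e.
have r_small : (size (b - c *: a)%R < size a)%N.
  rewrite eqs size_sub_lead // ?size_scale // lead_coefZ.
  by rewrite /c divfK // lead_coef_eq0.
have [tD _ _ tZ] := Ht.
have er : t a * (b - c *: a) = t (b - c *: a) * a.
  by rewrite tD (endoN Ht) tZ mulrBr mulrBl -e -!scalerAl -!scalerAr mulrC.
by rewrite -(twisted_comm_size a0 r0 er) ltnn in r_small.
Qed.

End TwistedProportionality.

Section OreArithmetic.
Variables (K : fieldType) (sigma delta : {poly K} -> {poly K}).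
Hypothesis Hs : is_Kalg_endo sigma.
Hypothesis Hd : is_sigma_derivation sigma delta.

Local Notation S := {poly {poly K}}.
Local Notation xmul := (ore_xmul sigma delta).
Local Notation omul := (ore_mul sigma delta).

Lemma delta0 : delta 0 = 0.
Proof. by case: Hd => dD _ _; apply: (addrI (delta 0)); rewrite -dD !addr0. Qed.

(* ... and, being K-linear with delta 1 = 0, kills the constants *)
Lemma deltaC c : delta c%:P = 0.
Proof.
have [_ dZ dM] := Hd; have [_ _ s1 _] := Hs.
have d1 : delta 1 = 0.
  by have := dM 1 1; rewrite !mulr1 s1 mul1r => h; apply: (addrI (delta 1)); rewrite addr0 -h.
by rewrite -alg_polyC dZ d1 scaler0.
Qed.

Lemma coef_xmul (q : S) i :
  (xmul q)`_i = (if i is j.+1 then sigma q`_j else 0) + delta q`_i.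
Proof.
by rewrite /ore_xmul coefD coefMX !coef_map_id0 ?(endo0 Hs) ?delta0 //; case: i.
Qed.

Lemma xmulD (p q : S) : xmul (p + q) = xmul p + xmul q.
Proof.
have [sD _ _ _] := Hs; have [dD _ _] := Hd.
by apply/polyP => -[|i]; rewrite !(coefD, coef_xmul) ?dD ?sD ?add0r // addrACA.
Qed.

Lemma xmul0 : xmul 0 = 0.
Proof. by apply: (addrI (xmul 0)); rewrite -xmulD !addr0. Qed.

Lemma iter_xmulD k (p q : S) :
  iter k xmul (p + q) = iter k xmul p + iter k xmul q.
Proof. by elim: k => //= k ->; rewrite xmulD. Qed.

Lemma xmul_polyC (a : {poly K}) (Z : S) :
  xmul (a%:P * Z) = (sigma a)%:P * xmul Z + (delta a)%:P * Z.
Proof.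
have [_ sM _ _] := Hs; have [_ _ dM] := Hd.
apply/polyP => -[|i]; rewrite !(coefD, coefCM, coef_xmul) ?mulr0 ?add0r ?dM //.
by rewrite sM mulrDr addrA.
Qed.

Lemma xmul_scal (c : K) (Z : S) : xmul ((c%:P)%:P * Z) = (c%:P)%:P * xmul Z.
Proof. by rewrite xmul_polyC (endoC Hs) deltaC mul0r addr0. Qed.

Lemma xmulXn k : xmul 'X^k = 'X^(k.+1) :> S.
Proof.
have natC (b : bool) : (b%:R : {poly K}) = (b%:R)%:P by rewrite polyC_natr.
apply/polyP => -[|i]; rewrite coef_xmul /= !coefXn [X in delta X]natC deltaC addr0 //.
by rewrite natC (endoC Hs) -natC.
Qed.

Lemma ore_mul_widen (p q : S) N : (size p <= N)%N ->
  omul p q = \sum_(i < N) (p`_i)%:P * iter i xmul q.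
Proof.
move=> hN; rewrite /ore_mul (big_ord_widen _ (fun i => (p`_i)%:P * iter i xmul q) hN).
rewrite big_mkcond /=; apply: eq_bigr => i _; case: ltnP => // hi.
by rewrite nth_default // mul0r.
Qed.

Lemma ore_mul0l (q : S) : omul 0 q = 0.
Proof. by rewrite /ore_mul size_poly0 big_ord0. Qed.

Lemma ore_mulDl (p1 p2 q : S) : omul (p1 + p2) q = omul p1 q + omul p2 q.
Proof.
set N := maxn (size p1) (size p2).
rewrite (@ore_mul_widen p1 _ N) ?leq_maxl // (@ore_mul_widen p2 _ N) ?leq_maxr //.
rewrite (@ore_mul_widen _ _ N) ?(leq_trans (size_polyD _ _)) // -big_split /=.
by apply: eq_bigr => i _; rewrite coefD polyCD mulrDl.
Qed.

Lemma ore_mulDr (p q1 q2 : S) : omul p (q1 + q2) = omul p q1 + omul p q2.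
Proof. by rewrite /ore_mul -big_split; apply: eq_bigr => i _; rewrite iter_xmulD mulrDr. Qed.

Lemma ore_mul_polyC (a : {poly K}) (q : S) : omul a%:P q = a%:P * q.
Proof. by rewrite (@ore_mul_widen _ _ 1) ?size_polyC ?leq_b1 // big_ord1 coefC. Qed.

Lemma ore_mul_polyCl (a : {poly K}) (p q : S) : omul (a%:P * p) q = a%:P * omul p q.
Proof.
rewrite (@ore_mul_widen _ _ (size p)); last by rewrite mul_polyC size_scale_leq.
by rewrite /ore_mul mulr_sumr; apply: eq_bigr => i _; rewrite coefCM polyCM mulrA.
Qed.

Lemma ore_mul_mulX (p r : S) : omul (p * 'X) r = omul p (xmul r).
Proof.
rewrite (@ore_mul_widen _ _ (size p).+1); last first.
  by have [->|p0] := eqVneq p 0; rewrite ?mul0r ?size_poly0 ?size_mulX.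
rewrite big_ord_recl coefMX polyC0 mul0r add0r.
by apply: eq_bigr => i _; rewrite coefMX /= -iterS iterSr.
Qed.

Lemma xmul_ore_mul (q r : S) : xmul (omul q r) = omul (xmul q) r.
Proof.
rewrite [in RHS]/ore_xmul ore_mulDl ore_mul_mulX.
rewrite !(@ore_mul_widen (map_poly _ q) _ (size q)) ?size_poly //.
rewrite /ore_mul (big_morph _ xmulD xmul0) -big_split /=; apply: eq_bigr => i _.
by rewrite xmul_polyC !coef_map_id0 ?(endo0 Hs) ?delta0 // -iterSr.
Qed.

Lemma ore_mulA (p q r : S) : omul p (omul q r) = omul (omul p q) r.
Proof.
rewrite [omul p q]/ore_mul (big_morph (omul^~ r) (fun a b => ore_mulDl a b r) (ore_mul0l r)).
apply: eq_bigr => i _; rewrite ore_mul_polyCl; congr (_ * _).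
by elim: (nat_of_ord i) => //= k ->; rewrite xmul_ore_mul.
Qed.

(* 1 is a right unit, since x^k 1 = x^k *)
Lemma ore_mul1r (p : S) : omul p 1 = p.
Proof.
have iter_xmul1 k : iter k xmul 1 = 'X^k :> S.
  by elim: k => [|k IH]; rewrite ?expr0 //= IH xmulXn.
by rewrite /ore_mul -[RHS]coefK poly_def; apply: eq_bigr => i _; rewrite iter_xmul1 mul_polyC.
Qed.

Lemma ore_mul_scalr (c : K) (p Z : S) : omul p ((c%:P)%:P * Z) = (c%:P)%:P * omul p Z.
Proof.
have iter_scal k : iter k xmul ((c%:P)%:P * Z) = (c%:P)%:P * iter k xmul Z.
  by elim: k => //= k ->; rewrite xmul_scal.
by rewrite /ore_mul mulr_sumr; apply: eq_bigr => i _; rewrite iter_scal mulrCA.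
Qed.

Lemma ore_mul_scal_comm (c : K) (p : S) : omul p (c%:P)%:P = omul (c%:P)%:P p.
Proof. by rewrite -[(c%:P)%:P in LHS]mulr1 ore_mul_scalr ore_mul1r ore_mul_polyC. Qed.

Section CentralizerSubalgebra.
Variable P : S.
Local Notation C := (centralizer sigma delta P).

Lemma centralizer_scal (c : K) : C (c%:P)%:P.
Proof. exact: ore_mul_scal_comm. Qed.

Lemma centralizer_add A B : C A -> C B -> C (A + B).
Proof. by rewrite /centralizer ore_mulDl ore_mulDr => -> ->. Qed.

Lemma centralizer_mul A B : C A -> C B -> C (omul A B).
Proof. by rewrite /centralizer => CA CB; rewrite ore_mulA CA -ore_mulA CB ore_mulA. Qed.

Lemma gen_alg_sub_centralizer (G : S -> Prop) :
  (forall R, G R -> C R) -> forall Q, in_gen_alg sigma delta G Q -> C Q.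
Proof.
move=> GC Q; elim=> [c|R /GC //|A B _ CA _ CB|A B _ CA _ CB].
- exact: centralizer_scal.
- exact: centralizer_add.
- exact: centralizer_mul.
Qed.

End CentralizerSubalgebra.

Section Degree.
Hypothesis sigma_nonconst : (1 < size (sigma 'X))%N.

Lemma xmul_size_lead (q : S) : q != 0 ->
  size (xmul q) = (size q).+1 /\ lead_coef (xmul q) = sigma (lead_coef q).
Proof.
move=> q0; have sigma_lc : sigma (lead_coef q) != 0 by rewrite endo_eq0 // lead_coef_eq0.
have sq : size (map_poly sigma q) = size q by rewrite size_map_poly_id0.
have sqX : size (map_poly sigma q * 'X) = (size q).+1.
  by rewrite size_mulX -?size_poly_eq0 sq ?size_poly_eq0.
have lt_delta : (size (map_poly delta q) < size (map_poly sigma q * 'X)%R)%N.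
  by rewrite sqX ltnS; apply: size_poly.
rewrite /ore_xmul size_addl // lead_coefDl // sqX lead_coefMX.
by rewrite lead_coef_map_id0 ?(endo0 Hs).
Qed.

Lemma iter_xmul_size_lead k (q : S) : q != 0 ->
  size (iter k xmul q) = (size q + k)%N /\
  lead_coef (iter k xmul q) = iter k sigma (lead_coef q).
Proof.
move=> q0; elim: k => [|k [sk lk]]; first by rewrite addn0.
have qk0 : iter k xmul q != 0.
  by rewrite -size_poly_eq0 sk addn_eq0 size_poly_eq0 (negbTE q0).
by have [s1 l1] := xmul_size_lead qk0; rewrite /= s1 l1 sk lk addnS.
Qed.

(* the product p q = sum p_i x^i q is dominated by its top term *)
Lemma ore_mul_size_lead (p q : S) : p != 0 -> q != 0 ->
  size (omul p q) = (size p + size q).-1 /\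
  lead_coef (omul p q) = lead_coef p * iter (size p).-1 sigma (lead_coef q).
Proof.
move=> p0 q0; set m := (size p).-1.
rewrite /ore_mul (polySpred p0) big_ord_recr /= -/m.
have [sm lm] := iter_xmul_size_lead m q0.
have lp0 : p`_m != 0 by rewrite -lead_coefE lead_coef_eq0.
have s_top : size ((p`_m)%:P * iter m xmul q) = (size q + m)%N by rewrite size_Cmul // sm.
have lower : (size (\sum_(i < m) (p`_i)%:P * iter i xmul q)%R <
                size ((p`_m)%:P * iter m xmul q)%R)%N.
  rewrite s_top (leq_ltn_trans (size_sum _ _ _)) // (polySpred q0) addSn ltnS.
  apply/bigmax_leqP => i _; rewrite mul_polyC (leq_trans (size_scale_leq _ _)) //.
  have [si _] := iter_xmul_size_lead i q0.
  by rewrite si (polySpred q0) addSn -addnS leq_add2l.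
rewrite addrC size_addl // lead_coefDl // s_top addnC; split=> //.
by rewrite mul_polyC lead_coefZ lm -lead_coefE.
Qed.
End Degree.

End OreArithmetic.

Lemma exists_min_measure (T : Type) (A : T -> Prop) (f : T -> nat) :
  (exists x, A x) -> exists x, A x /\ forall y, A y -> (f x <= f y)%N.
Proof.
move=> [x0 Ax0]; apply: NNPP => no_min.
suff above k : forall x, A x -> (k <= f x)%N.
  by have := above (f x0).+1 x0 Ax0; rewrite ltnn.
elim: k => // k IH x Ax; rewrite ltnNge; apply/negP => fx_le.
by apply: no_min; exists x; split=> // y /IH; apply: leq_trans fx_le.
Qed.

Lemma iter_closed (T : Type) (A : T -> Prop) (f : T -> T) k x :
  (forall y, A y -> A (f y)) -> A x -> A (iter k f x).
Proof. by move=> Af Ax; elim: k => //= k; apply: Af. Qed.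

Section Generation.
Variables (K : fieldType) (sigma delta : {poly K} -> {poly K}).
Variables (P : {poly {poly K}}) (n : nat).
Hypothesis Hs : is_Kalg_endo sigma.
Hypothesis Hd : is_sigma_derivation sigma delta.
Hypothesis sigma_deg : (2 < size (sigma 'X))%N.
Hypothesis P_deg : (size P).-1 = n.
Hypothesis n_gt0 : (0 < n)%N.

Local Notation S := {poly {poly K}}.
Local Notation omul := (ore_mul sigma delta).
Local Notation C := (centralizer sigma delta P).

Let sigma_nonconst : (1 < size (sigma 'X))%N. Proof. exact: ltnW. Qed.

Let P0 : P != 0.
Proof. by rewrite -size_poly_eq0; move: n_gt0; rewrite -P_deg; case: size. Qed.

Let C1 : C 1.
Proof. by rewrite -[1]polyC1 -polyC1; apply: centralizer_scal. Qed.

Lemma centralizer_lead (Q : S) : C Q -> Q != 0 ->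
  lead_coef P * iter n sigma (lead_coef Q) =
  lead_coef Q * iter (size Q).-1 sigma (lead_coef P).
Proof.
move=> CQ Q0; have [_ lPQ] := ore_mul_size_lead delta Hs sigma_nonconst P0 Q0.
have [_ lQP] := ore_mul_size_lead delta Hs sigma_nonconst Q0 P0.
by rewrite -P_deg -lPQ CQ lQP.
Qed.

Lemma centralizer_reduce (Q Z : S) :
  C Q -> C Z -> Q != 0 -> Z != 0 -> size Q = size Z ->
  exists c : K, (size (Q - (c%:P)%:P * Z)%R < size Q)%N.
Proof.
move=> CQ CZ Q0 Z0 eqs.
have lQ0 : lead_coef Q != 0 by rewrite lead_coef_eq0.
have lZ0 : lead_coef Z != 0 by rewrite lead_coef_eq0.
have twist : iter n sigma (lead_coef Z) * lead_coef Q =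
             iter n sigma (lead_coef Q) * lead_coef Z.
  have lP0 : lead_coef P != 0 by rewrite lead_coef_eq0.
  apply: (mulfI lP0); rewrite !mulrA (centralizer_lead CQ Q0) (centralizer_lead CZ Z0) eqs.
  by rewrite mulrAC [RHS]mulrAC [lead_coef Z * _]mulrC.
(* sigma^n multiplies degrees by (deg sigma(y))^n > 1 *)
have t_deg : (1 < (size (iter n sigma 'X)).-1)%N.
  rewrite (size_iter_endoX Hs); apply: leq_ltn_trans n_gt0 (ltn_expl _ _).
  by rewrite -ltnS prednK ?(ltnW sigma_nonconst).
have [c lQ] := twisted_comm_proportional (iter_endo Hs n) t_deg lZ0 lQ0 twist.
exists c; apply: size_sub_lead => //.
  rewrite mul_polyC size_scale // polyC_eq0.
  by apply: contra lQ0 => /eqP c0; rewrite lQ c0 scale0r.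
by rewrite mul_polyC lead_coefZ lQ mul_polyC.
Qed.

Lemma iter_mulP_size k (G : S) :
  G != 0 -> size (iter k (omul P) G) = (size G + k * n)%N.
Proof.
move=> G0; elim: k => [|k IH]; first by rewrite addn0.
have Gk0 : iter k (omul P) G != 0.
  by rewrite -size_poly_eq0 IH addn_eq0 size_poly_eq0 (negbTE G0).
have [sPG _] := ore_mul_size_lead delta Hs sigma_nonconst P0 Gk0.
by rewrite /= sPG IH (polySpred P0) P_deg addSn mulSn addnCA.
Qed.

(* The base element of the residue class i mod n: an element of C_S(P)
   which, as soon as some nonzero element of C_S(P) has degree = i mod n, is
   itself such an element, of least size. *)
Definition residue_base (i : nat) (G : S) : Prop :=
  C G /\ forall Z, C Z -> Z != 0 -> ((size Z).-1 %% n = i)%N ->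
    [/\ G != 0, ((size G).-1 %% n = i)%N & (size G <= size Z)%N].

(* least elements exist classically; for an empty class, 1 will do *)
Lemma residue_base_exists i : exists G, residue_base i G.
Proof.
pose good Z := [/\ C Z, Z != 0 & ((size Z).-1 %% n = i)%N].
have [ex_good|no_good] := classic (exists Z, good Z).
  have [G [[CG G0 iG] minG]] := exists_min_measure (fun Z : S => size Z) ex_good.
  by exists G; split=> // Z CZ Z0 iZ; split=> //; apply: minG.
exists 1; split=> // Z CZ Z0 iZ.
by case: no_good; exists Z.
Qed.

Section Generators.
Variable g : 'I_n -> S.
Hypothesis g_P : exists i, g i = P.
Hypothesis g_base : forall i : 'I_n, (i != 0 :> nat) -> residue_base i (g i).

Local Notation gen := (in_gen_alg sigma delta (fun R => exists i, R = g i)).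

Let gen1 : gen 1. Proof. by rewrite -[1]polyC1 -polyC1; apply: ga_const. Qed.

Let gen0 : gen 0. Proof. by rewrite -[0]polyC0 -polyC0; apply: ga_const. Qed.

Lemma gen_residue_base (Q : S) : C Q -> Q != 0 ->
  exists G, [/\ C G, gen G, G != 0,
    ((size G).-1 %% n = (size Q).-1 %% n)%N & (size G <= size Q)%N].
Proof.
move=> CQ Q0; set i := ((size Q).-1 %% n)%N.
have [i0|i_neq0] := eqVneq i 0.
  by exists 1; rewrite size_poly1 mod0n size_poly_gt0 oner_neq0 i0.
have i_lt : (i < n)%N by rewrite ltn_pmod.
have [CG /(_ Q CQ Q0 erefl) [G0 iG sG]] := @g_base (Ordinal i_lt) i_neq0.
by exists (g (Ordinal i_lt)); split=> //; apply: ga_gen; exists (Ordinal i_lt).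
Qed.

(* a generated element of C_S(P) of the same degree as Q: a base element
   times a power of P *)
Lemma gen_same_size (Q : S) : C Q -> Q != 0 ->
  exists Z, [/\ C Z, gen Z, Z != 0 & size Z = size Q].
Proof.
move=> CQ Q0; have [G [CG gG G0 iG sG]] := gen_residue_base CQ Q0.
have genP : gen P by case: g_P => i <-; apply: ga_gen; exists i.
have dG : ((size G).-1 <= (size Q).-1)%N by rewrite -!subn1 leq_sub2r.
exists (iter (((size Q).-1 - (size G).-1) %/ n) (omul P) G); split.
- by apply: iter_closed CG => Z; apply: centralizer_mul.
- by apply: iter_closed gG => Z; apply: ga_mul.
- by rewrite -size_poly_eq0 iter_mulP_size // addn_eq0 size_poly_eq0 (negbTE G0).
rewrite iter_mulP_size // divnK; last by rewrite -eqn_mod_dvd // iG.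
by rewrite (polySpred G0) (polySpred Q0) addSn subnKC.
Qed.

Lemma centralizer_sub_gen (Q : S) : C Q -> gen Q.
Proof.
elim: {Q}(size Q) {-2}Q (leqnn (size Q)) => [|k IH] Q sQ CQ.
  by move: sQ; rewrite leqn0 size_poly_eq0 => /eqP ->.
have [->//|Q0] := eqVneq Q 0.
have [Z [CZ gZ Z0 sZ]] := gen_same_size CQ Q0.
have [c small] := centralizer_reduce CQ CZ Q0 Z0 (esym sZ).
have cZ : (c%:P)%:P * Z = omul (c%:P)%:P Z by rewrite ore_mul_polyC.
have C_rest : C (Q - (c%:P)%:P * Z).
  rewrite -mulNr -!polyCN -(ore_mul_polyC sigma delta).
  by apply: centralizer_add => //; apply: centralizer_mul => //; apply: centralizer_scal.
rewrite -(subrK ((c%:P)%:P * Z) Q); apply: ga_add.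
  by apply: IH C_rest; rewrite -ltnS (leq_trans small).
by rewrite cZ; apply: ga_mul gZ; apply: ga_const.
Qed.

End Generators.

End Generation.
Unset Implicit Arguments.

Theorem corollary5p1 (K : fieldType) (sigma delta : {poly K} -> {poly K})
    (Hsigma : is_Kalg_endo sigma) (Hdeg : (2 < size (sigma 'X))%N)
    (Hdelta : is_sigma_derivation sigma delta)
    (P : {poly {poly K}}) (n : nat) (HPdeg : (size P).-1 = n) (Hn : (0 < n)%N) :
  exists g : 'I_n -> {poly {poly K}},
    forall Q, centralizer sigma delta P Q <->
              in_gen_alg sigma delta (fun R => exists i, R = g i) Q.
Proof.
pose spec (i : 'I_n) (G : {poly {poly K}}) :=
  if (i == 0 :> nat) then G = P else residue_base sigma delta P n i G.
have [g g_spec] : exists g : 'I_n -> {poly {poly K}}, forall i, spec i (g i).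
  apply: ClassicalEpsilon.choice => i; rewrite /spec; case: eqP => _; first by exists P.
  exact: residue_base_exists.
have g_P : exists i, g i = P by exists (Ordinal Hn); exact: g_spec (Ordinal Hn).
have g_base (i : 'I_n) : (i != 0 :> nat) -> residue_base sigma delta P n i (g i).
  by move/negbTE=> i0; have := g_spec i; rewrite /spec i0.
exists g => Q; split; first exact: centralizer_sub_gen.
apply: gen_alg_sub_centralizer => // R [i ->].
have [i0|i_neq0] := eqVneq (i : nat) 0; last exact: (g_base i i_neq0).1.
by have := g_spec i; rewrite /spec i0 => ->.
Qed.
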